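(* There exist clustering instances with $N\subseteq C$ and $k\le n$ and outcomes $W$ in them that satisfy UPRF but do not satisfy rank-JR.
   Context: Let $(\mathcal X,d)$ be a metric space, $N=[n]$ a set of agents and $C$ a set of candidates located in $\mathcal X$, $k\in\mathbb N^+$; an outcome is $W\subseteq C$ with $|W|\le k$; $B(i,r)=\{x\in\mathcal X:d(i,x)\le r\}$. UPRF: $W$ satisfies UPRF if there are no $\ell\in\mathbb N$, no $N'\subseteq N$ with $|N'|\ge \ell n/k$, and no $y\in\mathbb R$ with $\max_{i,i'\in N'}d(i,i')\le y$ and $|\bigcup_{i\in N'}B(i,y)\cap W|<\ell$. Rank-JR: $W$ satisfies rank-JR if for every $y\in\mathbb R$ and every $N'\subseteq N$ with $|N'|\ge n/k$ and $|\bigcap_{i\in N'}B(i,y)\cap C|\ge1$ there is $i\in N'$ with $|B(i,y)\cap W|\ge1$. *)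

From Stdlib Require Import Reals.
From HB Require Import structures.
From mathcomp Require Import all_boot all_order all_algebra.
From mathcomp Require Import Rstruct.
Set Implicit Arguments. Unset Strict Implicit. Unset Printing Implicit Defensive.
Import Order.TTheory GRing.Theory Num.Theory.
Local Open Scope ring_scope.

Definition is_metric (X : Type) (d : X -> X -> R) : Prop :=
  (forall x y, 0 <= d x y) /\
  (forall x y, d x y = 0 <-> x = y) /\
  (forall x y, d x y = d y x) /\
  (forall x y z, d x z <= d x y + d y z).

(* Agents N = [n] = 'I_n located by [agent]; candidates C = the finite type Cand
   located by [cand]; outcome W : {set Cand}. *)

Definition union_ball_W (X : Type) (d : X -> X -> R) (n : nat) (Cand : finType)
  (agent : 'I_n -> X) (cand : Cand -> X) (N' : {set 'I_n}) (y : R) (W : {set Cand}) : nat :=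
  #|[set c in W | [exists i in N', d (agent i) (cand c) <= y]]|.

Definition UPRF (X : Type) (d : X -> X -> R) (n : nat) (Cand : finType)
  (agent : 'I_n -> X) (cand : Cand -> X) (k : nat) (W : {set Cand}) : Prop :=
  ~ exists (l : nat) (N' : {set 'I_n}) (y : R),
      ((l%:R * n%:R / k%:R : R) <= #|N'|%:R) /\
      (forall i i', i \in N' -> i' \in N' -> d (agent i) (agent i') <= y) /\
      (union_ball_W d agent cand N' y W < l)%N.

Definition rankJR (X : Type) (d : X -> X -> R) (n : nat) (Cand : finType)
  (agent : 'I_n -> X) (cand : Cand -> X) (k : nat) (W : {set Cand}) : Prop :=
  forall (y : R) (N' : {set 'I_n}),
    (n%:R / k%:R : R) <= #|N'|%:R ->
    (exists c : Cand, forall i, i \in N' -> d (agent i) (cand c) <= y) ->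
    exists2 i, i \in N' & [set c in W | d (agent i) (cand c) <= y] != set0.

From Stdlib Require Import Reals.
From HB Require Import structures.
From mathcomp Require Import all_boot all_order all_algebra.
From mathcomp Require Import Rstruct.
From mathcomp Require Import zify.
Import Order.TTheory GRing.Theory Num.Theory.
Local Open Scope ring_scope.

(* Two agents at 0 and 4 on the integer line, candidates at 0, ..., 8, one
   seat, and the winner placed at 7.  With k = 1 the only group UPRF speaks
   about is the whole electorate with l = 1, at radii at least its diameter 4,
   and the winner is within 3 of the agent at 4.  At radius 2, however, both
   agents share the candidate 2 while the winner is at distance 7 and 3 from
   them, so rank-JR fails. *)

Definition natdist (m n : nat) : R := `|m - n|%N%:R.

Lemma natdist_metric : is_metric natdist.
Proof.
rewrite /natdist; split; first by move=> m n; exact: ler0n.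
split.
  move=> m n; split => [/eqP|->]; last by rewrite distnn.
  by rewrite pnatr_eq0 distn_eq0 => /eqP.
split; first by move=> m n; rewrite distnC.
by move=> m1 m2 m3; rewrite -natrD ler_nat leqD_dist.
Qed.

Section OneSeat.

Variables (X : Type) (d : X -> X -> R) (n : nat) (Cand : finType).
Variables (agent : 'I_n -> X) (cand : Cand -> X) (W : {set Cand}).

Lemma union_ball_W_gt0 {N' : {set 'I_n}} {y : R} {c : Cand} {i : 'I_n} :
  c \in W -> i \in N' -> d (agent i) (cand c) <= y ->
  (0 < union_ball_W d agent cand N' y W)%N.
Proof.
move=> cW iN' near_ic; apply/card_gt0P; exists c.
by rewrite inE cW; apply/existsP; exists i; rewrite iN'.
Qed.

Lemma UPRF_one_seat :
  (forall y, (forall i i', d (agent i) (agent i') <= y) ->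
     exists2 c, c \in W & exists i, d (agent i) (cand c) <= y) ->
  UPRF d agent cand 1 W.
Proof.
move=> served [l [N' [y [large [diam few]]]]].
move: large; rewrite RdivE RmultE mulr1n divr1 -natrM ler_nat => large.
case: l large few => [|l] large few; first by [].
have N'T : N' = setT.
  apply/eqP; rewrite eqEcard subsetT cardsT card_ord.
  by rewrite mulSn in large; exact: leq_trans (leq_addr _ _) large.
subst N'.
have [c cW [i near_ic]] := served y (fun i i' => diam i i' (in_setT i) (in_setT i')).
have l_gt0 : (0 < l)%N := leq_ltn_trans (union_ball_W_gt0 cW (in_setT i) near_ic) few.
have := ltn_ord i; move: large; rewrite cardsT card_ord.
nia.
Qed.

End OneSeat.

Definition agent_pos (i : 'I_2) : nat := 4 * i.

Definition winner : {set 'I_9} := [set inord 7].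

Lemma agents_are_candidates (i : 'I_2) : exists c : 'I_9, nat_of_ord c = agent_pos i.
Proof. by exists (inord (agent_pos i)); rewrite inordK //; case: i => [[|[|]]]. Qed.

Lemma winner_UPRF : UPRF natdist agent_pos (@nat_of_ord 9) 1 winner.
Proof.
apply: UPRF_one_seat => y diam; exists (inord 7); first exact: set11.
exists (inord 1); apply: le_trans (diam ord0 (inord 1)).
by rewrite /agent_pos /natdist !inordK // ler_nat.
Qed.

Lemma winner_not_rankJR : ~ rankJR natdist agent_pos (@nat_of_ord 9) 1 winner.
Proof.
move=> /(_ 2%:R setT) [||i _].
- by rewrite RdivE divr1 cardsT card_ord.
- by exists (inord 2) => i _; rewrite inordK //; case: i => [[|[|]]].
- apply/negP; rewrite negbK; apply/eqP/setP => c; rewrite !inE.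
  case: eqP => //= ->; rewrite inordK //.
  by case: i => [m lt_m2]; rewrite /natdist ler_nat /agent_pos /=; case: m lt_m2 => [|[|]].
Qed.

Theorem mainTheorem5 :
  exists (X : Type) (d : X -> X -> R) (n k : nat) (Cand : finType)
         (agent : 'I_n -> X) (cand : Cand -> X) (W : {set Cand}),
    is_metric d /\ (0 < k)%N /\ (k <= n)%N /\
    (forall i : 'I_n, exists c : Cand, cand c = agent i) /\
    (#|W| <= k)%N /\
    UPRF d agent cand k W /\ ~ rankJR d agent cand k W.
Proof.
exists nat, natdist, 2%N, 1%N, ('I_9 : finType), agent_pos, (@nat_of_ord 9), winner.
split; first exact: natdist_metric.
do 2 split => //.
split; first exact: agents_are_candidates.
split; first by rewrite cards1.
split; [exact: winner_UPRF | exact: winner_not_rankJR].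
Qed.
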